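(* Let $R$ be a finite ring with identity, $\alpha\in(0,1)$, $Q$ a probability distribution on $R$ constant on similarity classes, and $(X_t)$ the Markov chain defined below. Then for every fixed $\epsilon<1/2$ (with $\epsilon>0$), the mixing time satisfies \[t_{\mathrm{mix}}(\epsilon)\le\frac{\log\epsilon}{\log(1-\alpha)}+1.\]
   Context: $a,b$ are similar if $b=uau^{-1}$ for some unit $u$ of $R$. The Markov chain $(X_t)$ on $R$: at each step an independent coin with Heads probability $\alpha$ is tossed; on Heads, $X_{t+1}=X_t+Y$ with $Y$ uniform on $R$; on Tails, $X_{t+1}=Z\cdot X_t$ with $Z$ drawn from $Q$ (all independent). Let $M_R$ be its transition matrix and $\pi$ its stationary distribution. The total variation distance is $\|\mu-\nu\|_{TV}=\frac12\sum_{x}|\mu(x)-\nu(x)|$, $d(t)=\max_{x\in R}\|M_R^t(x,\cdot)-\pi\|_{TV}$, and $t_{\mathrm{mix}}(\epsilon)=\min\{t\mid d(t)\le\epsilon\}$. *)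

From HB Require Import structures.
From mathcomp Require Import all_boot all_order all_algebra.
From mathcomp Require Import all_classical all_reals all_analysis.
Set Implicit Arguments. Unset Strict Implicit. Unset Printing Implicit Defensive.
Import Order.TTheory GRing.Theory Num.Theory.
Local Open Scope ring_scope.

Section Chain.
Variables (K : realType) (R : finPzRingType).

Definition is_unit (u : R) : Prop := exists v : R, u * v = 1 /\ v * u = 1.

Definition ring_similar (a b : R) : Prop :=
  exists u v : R, u * v = 1 /\ v * u = 1 /\ b = u * a * v.

Definition is_distr (P : R -> K) : Prop :=
  (forall x, 0 <= P x) /\ \sum_(x : R) P x = 1.

(* transition matrix: with prob alpha add a uniform Y, else multiply on the
   left by Z ~ Q *)
Definition MR (alpha : K) (Q : R -> K) (x y : R) : K :=
  alpha / #|R|%:R + (1 - alpha) * \sum_(z : R | z * x == y) Q z.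

Fixpoint MRpow (alpha : K) (Q : R -> K) (t : nat) (x y : R) : K :=
  match t with
  | 0 => (x == y)%:R
  | t'.+1 => \sum_(w : R) MRpow alpha Q t' x w * MR alpha Q w y
  end.

Definition is_stationary (alpha : K) (Q : R -> K) (pi : R -> K) : Prop :=
  is_distr pi /\ forall y, \sum_(x : R) pi x * MR alpha Q x y = pi y.

Definition tv_dist (mu nu : R -> K) : K :=
  2^-1 * \sum_(x : R) `|mu x - nu x|.

Definition dist_t (alpha : K) (Q : R -> K) (pi : R -> K) (t : nat) : K :=
  \big[Num.max/0]_(x : R) tv_dist (MRpow alpha Q t x) pi.

Definition is_tmix (alpha : K) (Q : R -> K) (pi : R -> K) (eps : K) (t : nat)
  : Prop :=
  dist_t alpha Q pi t <= eps /\
  forall s : nat, dist_t alpha Q pi s <= eps -> (t <= s)%N.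

End Chain.

(* With probability alpha a step of the chain jumps to a uniform point whatever
   its start, so the uniform part of the kernel cancels on any signed measure of
   total mass 0, and the remaining part, of mass 1 - alpha, cannot increase the
   l1 norm (a Doeblin minorization).  Applied to the deviation from pi this gives
   d(t) <= (1 - alpha)^t, which is at most eps once t > ln eps / ln (1 - alpha). *)

From HB Require Import structures.
From mathcomp Require Import all_boot all_order all_algebra.
From mathcomp Require Import all_classical all_reals all_analysis.
From mathcomp Require Import lra.
Set Implicit Arguments. Unset Strict Implicit. Unset Printing Implicit Defensive.
Import Order.TTheory GRing.Theory Num.Theory.
Local Open Scope ring_scope.

Lemma sum_delta (T : finType) (V : pzSemiRingType) (x : T) :
  \sum_(y : T) ((x == y)%:R : V) = 1.
Proof. by rewrite (bigD1 x) //= eqxx big1 ?addr0 // => y; rewrite eq_sym => /negbTE ->. Qed.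

Section LeftMultiplicationKernel.
Variables (K : realType) (R : finPzRingType) (Q : R -> K).

Definition mul_kernel (w y : R) : K := \sum_(z : R | z * w == y) Q z.

Lemma mul_kernel_ge0 : (forall z, 0 <= Q z) -> forall w y, 0 <= mul_kernel w y.
Proof. by move=> Q_ge0 w y; apply: sumr_ge0. Qed.

Lemma sum_mul_kernel : \sum_(z : R) Q z = 1 -> forall w, \sum_(y : R) mul_kernel w y = 1.
Proof. by move=> Q_sum1 w; rewrite -Q_sum1 [RHS](partition_big (fun z => z * w) predT). Qed.

End LeftMultiplicationKernel.

Section DoeblinContraction.
Variables (K : realType) (R : finPzRingType) (alpha : K) (Q : R -> K).
Hypotheses (alpha_le1 : alpha <= 1) (Q_distr : is_distr Q).

Local Notation M := (MR alpha Q).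
Local Notation Mpow := (MRpow alpha Q).

Lemma MRE w y : M w y = alpha / #|R|%:R + (1 - alpha) * mul_kernel Q w y.
Proof. by []. Qed.

Lemma sum_MR_row w : \sum_(y : R) M w y = 1.
Proof.
have card_neq0 : (#|R|%:R : K) != 0 by rewrite pnatr_eq0 -lt0n; apply/card_gt0P; exists 0.
under eq_bigr do rewrite MRE.
rewrite big_split /= -[X in _ + X]mulr_sumr sum_mul_kernel ?Q_distr.2 // mulr1.
by rewrite sumr_const -[X in X + _]mulr_natr -mulrA mulVf // mulr1 addrC subrK.
Qed.

Lemma sum_MRpow_row t x : \sum_(y : R) Mpow t x y = 1.
Proof.
elim: t => [|t IH] /=; first exact: sum_delta.
by rewrite exchange_big /= -IH; apply: eq_bigr => w _; rewrite -mulr_sumr sum_MR_row mulr1.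
Qed.

Lemma MR_contraction (d : R -> K) : \sum_(w : R) d w = 0 ->
  \sum_(y : R) `|\sum_(w : R) d w * M w y| <= (1 - alpha) * \sum_(w : R) `|d w|.
Proof.
move=> d_sum0.
have q_ge0 : 0 <= 1 - alpha by rewrite subr_ge0.
have uniform_part_vanishes y :
    \sum_w d w * M w y = (1 - alpha) * \sum_w d w * mul_kernel Q w y.
  under eq_bigr do rewrite MRE mulrDr [d _ * (_ * mul_kernel _ _ _)]mulrCA.
  by rewrite big_split /= -mulr_suml d_sum0 mul0r add0r mulr_sumr.
under eq_bigr do rewrite uniform_part_vanishes normrM (ger0_norm q_ge0).
rewrite -mulr_sumr ler_wpM2l //.
apply: le_trans; first by apply: ler_sum => y _; exact: ler_norm_sum.
rewrite exchange_big /=; apply: ler_sum => w _.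
under eq_bigr do rewrite normrM (ger0_norm (mul_kernel_ge0 Q_distr.1 _ _)).
by rewrite -mulr_sumr sum_mul_kernel ?Q_distr.2 ?mulr1.
Qed.

Variable pi : R -> K.
Hypothesis pi_stationary : is_stationary alpha Q pi.

Lemma MRpowS_sub_stationary t x y :
  Mpow t.+1 x y - pi y = \sum_(w : R) (Mpow t x w - pi w) * M w y.
Proof.
rewrite /= -(pi_stationary.2 y) -sumrB.
by apply: eq_bigr => w _; rewrite mulrBl.
Qed.

Lemma sum_MRpow_sub_stationary t x : \sum_(y : R) (Mpow t x y - pi y) = 0.
Proof. by rewrite sumrB sum_MRpow_row pi_stationary.1.2 subrr. Qed.

Lemma l1_MRpow_sub_stationary t x :
  \sum_(y : R) `|Mpow t x y - pi y| <= 2 * (1 - alpha) ^+ t.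
Proof.
elim: t => [|t IH].
  rewrite expr0 mulr1.
  apply: le_trans; first by apply: ler_sum => y _; exact: ler_normB.
  under eq_bigr do rewrite normr_nat (ger0_norm (pi_stationary.1.1 _)).
  by rewrite big_split /= sum_delta pi_stationary.1.2.
under eq_bigr do rewrite MRpowS_sub_stationary.
apply: le_trans (MR_contraction (sum_MRpow_sub_stationary t x)) _.
by rewrite exprS mulrCA ler_wpM2l // subr_ge0.
Qed.

Lemma dist_t_le_expr t : dist_t alpha Q pi t <= (1 - alpha) ^+ t.
Proof.
apply: bigmax_le => [|x _]; first by rewrite exprn_ge0 // subr_ge0.
apply: le_trans (ler_wpM2l _ (l1_MRpow_sub_stationary t x)) _; first by rewrite invr_ge0.
by rewrite mulrA mulVf ?mul1r.
Qed.

End DoeblinContraction.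

Lemma expr_le_ln_ratio (K : realType) (q eps : K) : 0 < q < 1 -> 0 < eps < 1 ->
  q ^+ (Num.truncn (ln eps / ln q)).+1 <= eps.
Proof.
move=> /andP[q_gt0 q_lt1] /andP[eps_gt0 eps_lt1].
have lnq_lt0 : ln q < 0 by rewrite ln_lt0 // q_gt0.
have lneps_lt0 : ln eps < 0 by rewrite ln_lt0 // eps_gt0.
set T := ln eps / ln q.
have T_ge0 : 0 <= T by rewrite mulr_le0 ?invr_le0 ?ltW.
have /andP[_ T_lt] := truncn_itv T_ge0.
rewrite -ler_ln ?posrE ?exprn_gt0 // lnXn // -mulr_natl.
have -> : ln eps = T * ln q by rewrite divfK // lt_eqF.
nra.
Qed.

Lemma is_tmix_exists_le (K : realType) (R : finPzRingType) (alpha : K) (Q pi : R -> K)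
    (eps : K) (n : nat) :
  dist_t alpha Q pi n <= eps -> exists2 t, is_tmix alpha Q pi eps t & (t <= n)%N.
Proof.
move=> dist_n_le.
have mixed : exists s, dist_t alpha Q pi s <= eps by exists n.
by case: (ex_minnP mixed) => t dist_t_le t_min; exists t; [split | apply: t_min].
Qed.

Theorem theorem4p1 (K : realType) (R : finPzRingType) (alpha : K)
  (Q : R -> K) (pi : R -> K) (eps : K) :
  0 < alpha < 1 ->
  is_distr Q ->
  (forall a b : R, ring_similar a b -> Q a = Q b) ->
  is_stationary alpha Q pi ->
  0 < eps < 2^-1 ->
  exists t : nat, is_tmix alpha Q pi eps t /\
    t%:R <= ln eps / ln (1 - alpha) + 1.
Proof.
move=> /andP[alpha_gt0 alpha_lt1] Q_distr _ pi_stationary /andP[eps_gt0 eps_lt_half].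
set T := ln eps / ln (1 - alpha).
have q_itv : 0 < 1 - alpha < 1 by apply/andP; split; lra.
have eps_itv : 0 < eps < 1 by apply/andP; split; lra.
have dist_le := le_trans (dist_t_le_expr (ltW alpha_lt1) Q_distr
  pi_stationary _) (expr_le_ln_ratio q_itv eps_itv).
have [t t_tmix t_le] := is_tmix_exists_le dist_le.
exists t; split => //.
have T_ge0 : 0 <= T.
  by rewrite mulr_le0 ?invr_le0 ?ltW ?ln_lt0 //; apply/andP; split; lra.
have /andP[truncT_le _] := truncn_itv T_ge0.
by apply: le_trans (_ : (Num.truncn T).+1%:R <= _); rewrite ?ler_nat // -natr1 lerD2r.
Qed.
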